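(* Let $J$ be a simple current of $\mathcal{A}$, $\psi,\chi,\chi'\in\{0,1\}$ and $i,i'\in I$. Then the fusion coefficient of $\mathcal{A}_{\rm perm}$ satisfies $$N_{(J,\psi)(i,\chi)}^{\phantom{(J,\psi)(i,\chi)}(i',\chi')}=\tfrac12\,N_{Ji}^{\ \ i'}\Big(N_{Ji}^{\ \ i'}+e^{i\pi(\psi+\chi-\chi')}\Big),$$ where $N_{Ji}^{\ \ i'}$ are the fusion coefficients of $\mathcal{A}$. Consequently a diagonal field $(i,\chi)$ is a fixed point of $(J,\psi)$ (i.e. $N_{(J,\psi)(i,\chi)}^{\phantom{(J,\psi)(i,\chi)}(i,\chi)}=1$) if and only if $\psi=0$ and $Ji=i$.
   Context: Let $\mathcal{A}$ be a unitary rational conformal field theory with finite set of primary fields $I$, identity $0\in I$, central charge $c$, conformal weights $h_i$, and modular matrices $S$ (symmetric, unitary, with $S_{0i}\ge S_{00}>0$) and $T=\mathrm{diag}(e^{2\pi i(h_i-c/24)})$; put $P=T^{1/2}ST^{2}ST^{1/2}$. Fusion coefficients of $\mathcal{A}$ are $N_{ij}^{\ \ k}=\sum_{m\in I}S_{im}S_{jm}\overline{S_{km}}/S_{0m}$ (non-negative integers). A simple current $J$ of $\mathcal{A}$ is a field with $S_{J0}=S_{00}$; for each $i$ there is then a unique field $Ji$ with $N_{Ji}^{\ \ k}=\delta_{k,Ji}$. The $\mathbb{Z}_2$ permutation orbifold $\mathcal{A}_{\rm perm}$ has primaries: diagonal $(i,\psi)$ ($i\in I$, $\psi\in\{0,1\}$),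 off-diagonal $\langle i,j\rangle$ (unordered pairs $i\neq j$), twisted $\widehat{(i,\psi)}$; identity $(0,0)$; modular matrix $S^{BHS}$ given by $S^{BHS}_{\langle i,j\rangle\langle p,q\rangle}=S_{ip}S_{jq}+S_{iq}S_{jp}$, $S^{BHS}_{\langle i,j\rangle(p,\psi)}=S_{ip}S_{jp}$, $S^{BHS}_{\langle i,j\rangle\widehat{(p,\psi)}}=0$, $S^{BHS}_{(i,\psi)(j,\chi)}=\tfrac12 S_{ij}^2$, $S^{BHS}_{(i,\psi)\widehat{(p,\chi)}}=\tfrac12 e^{i\pi\psi}S_{ip}$, $S^{BHS}_{\widehat{(p,\psi)}\widehat{(q,\chi)}}=\tfrac12 e^{i\pi(\psi+\chi)}P_{pq}$ (and symmetric). Fusion coefficients of $\mathcal{A}_{\rm perm}$ are defined by the Verlinde formula $N_{AB}^{\ \ C}=\sum_{N}S^{BHS}_{AN}S^{BHS}_{BN}\overline{S^{BHS}_{CN}}/S^{BHS}_{(0,0)N}$, the sum running over all primaries $N$ of $\mathcal{A}_{\rm perm}$. *)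

From HB Require Import structures.
From mathcomp Require Import all_boot all_order all_algebra all_field.
Set Implicit Arguments. Unset Strict Implicit. Unset Printing Implicit Defensive.
Import Order.TTheory GRing.Theory Num.Theory.
Local Open Scope ring_scope.

(* e^{i pi q} for a rational q: with q = a/b (b > 0, reduced),
   b.-root (-1) is the root of -1 of minimal argument, i.e. e^{i pi / b}. *)
Definition expipi (q : rat) : algC := ((absz (denq q)).-root (-1)) ^ (numq q).

Section Perm.
Variables (I : finType) (i0 : I) (S : I -> I -> algC) (h : I -> rat) (c : rat).

Definition Thalf (p : I) : algC := expipi (h p - c / 24%:R).
Definition Tdiag (p : I) : algC := expipi (2%:R * (h p - c / 24%:R)).

Definition Pmat (p q : I) : algC :=
  Thalf p * (\sum_m S p m * (Tdiag m) ^+ 2 * S m q) * Thalf q.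

Definition NA (i j k : I) : algC :=
  \sum_m S i m * S j m * (S k m)^* / S i0 m.

(* Primaries of A_perm: diagonal (i,psi), off-diagonal <i,j> (unordered pairs
   i <> j, represented by the ordered pair with enum_rank i < enum_rank j),
   twisted hat(i,psi). *)
Definition offpair := {x : I * I | (enum_rank x.1 < enum_rank x.2)%N}.
Definition pfield := ((I * 'I_2) + offpair + (I * 'I_2))%type.

Definition diagF (i : I) (psi : 'I_2) : pfield := inl (inl (i, psi)).
Definition offF (x : offpair) : pfield := inl (inr x).
Definition twF (i : I) (psi : 'I_2) : pfield := inr (i, psi).

Definition eph (psi : 'I_2) : algC := expipi (psi%:R).

Definition SBHS (A B : pfield) : algC :=
  match A, B with
  | inl (inl (i, psi)), inl (inl (j, chi)) => (S i j) ^+ 2 / 2%:R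
  | inl (inl (p, _)), inl (inr x) => S (val x).1 p * S (val x).2 p
  | inl (inr x), inl (inl (p, _)) => S (val x).1 p * S (val x).2 p
  | inl (inl (i, psi)), inr (p, _) => eph psi * S i p / 2%:R
  | inr (p, _), inl (inl (i, psi)) => eph psi * S i p / 2%:R
  | inl (inr x), inl (inr y) =>
      S (val x).1 (val y).1 * S (val x).2 (val y).2
      + S (val x).1 (val y).2 * S (val x).2 (val y).1
  | inl (inr _), inr _ => 0
  | inr _, inl (inr _) => 0
  | inr (p, psi), inr (q, chi) => eph psi * eph chi * Pmat p q / 2%:R
  end.

Definition Nperm (A B C : pfield) : algC :=
  \sum_N SBHS A N * SBHS B N * (SBHS C N)^* / SBHS (diagF i0 0) N.

End Perm.

Definition modular_data (I : finType) (i0 : I) (S : I -> I -> algC) : Prop :=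
  [/\ (forall i j, S i j = S j i),
      (forall i j, \sum_m S i m * (S j m)^* = (i == j)%:R),
      (0 < S i0 i0), (forall i, S i0 i0 <= S i0 i)
    & (forall i j k, NA i0 S i j k \in Num.nat)].

From HB Require Import structures.
From mathcomp Require Import all_boot all_order all_algebra all_field.
From mathcomp Require Import ring.
Import Order.TTheory GRing.Theory Num.Theory.
Set Implicit Arguments. Unset Strict Implicit. Unset Printing Implicit Defensive.
Local Open Scope ring_scope.

(* Write a_p = S_Jp S_ip conj(S_i'p) / S_0p, so that N_{Ji}^{i'} = sum_p a_p
   is the Verlinde formula of A.  In the Verlinde sum defining
   N_{(J,psi)(i,chi)}^{(i',chi')}, each of the three kinds of primaries
   contributes a simple expression in the a_p (with e = e^{i pi(psi+chi-chi')}):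
     - the two diagonal fields (p,0), (p,1) give a_p^2/4 each,
     - the off-diagonal field <p,q> gives a_p a_q,
     - the two twisted fields hat(p,0), hat(p,1) give e a_p/4 each.
   Since sum_p a_p^2 + 2 sum_{p<q} a_p a_q = (sum_p a_p)^2, the total is
   N (N + e) / 2 with N = N_{Ji}^{i'}.  When J is a simple current,
   N_{Ji}^{i'} = [i' = Ji], and the fixed-point criterion follows by
   inspecting the four values of N(N + (-1)^psi)/2. *)

Definition rank_lt {I : finType} (x : I * I) : bool :=
  (enum_rank x.1 < enum_rank x.2)%N.

Lemma sum_pairs_sym (I : finType) (V : nmodType) (F : I -> I -> V) :
  (forall p q, F p q = F q p) ->
  \sum_(x : I * I) F x.1 x.2 = \sum_p F p p + (\sum_(x | rank_lt x) F x.1 x.2) *+ 2.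
Proof.
move=> Fsym; rewrite [LHS](bigID rank_lt) /= addrC.
rewrite [X in X + _](bigID (fun x => x.1 == x.2)) /= mulr2n !addrA.
congr (_ + _ + _).
- under [RHS]eq_bigr => p _ do rewrite -(big_pred1_eq +%R p (F p)).
  rewrite pair_big_dep /=; apply: eq_bigl => -[p q] /=.
  by case: eqVneq => [->|_]; rewrite /rank_lt ?ltnn ?andbF.
- rewrite [RHS](reindex_inj (h := swap_pair) (can_inj swap_pairK)) /=.
  apply: eq_big => [[p q]|[p q] _]; last exact: Fsym.
  rewrite /rank_lt /= -leqNgt ltn_neqAle val_eqE (inj_eq enum_rank_inj).
  by rewrite andbC (eq_sym q).
Qed.

Lemma sqr_sum (I : finType) (R : comPzRingType) (a : I -> R) :
  (\sum_p a p) ^+ 2 = \sum_p a p ^+ 2 + (\sum_(x | rank_lt x) a x.1 * a x.2) *+ 2.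
Proof.
rewrite expr2 big_distrlr pair_bigA /= (sum_pairs_sym (F := fun p q => a p * a q)).
  by congr (_ + _); apply: eq_bigr => p _; rewrite expr2.
by move=> p q; apply: mulrC.
Qed.

Lemma sum_offpair (I : finType) (V : nmodType) (F : I * I -> V) :
  \sum_(x : offpair I) F (val x) = \sum_(x | rank_lt x) F x.
Proof. exact: esym (big_sub (@rank_lt I) F). Qed.

Lemma sum_pair_ord2 (T : finType) (V : nmodType) (G : T -> V) :
  \sum_(x : T * 'I_2) G x.1 = (\sum_p G p) *+ 2.
Proof.
rewrite -(pair_bigA _ (fun p (_ : 'I_2) => G p)) -sumrMnl.
by apply: eq_bigr => p _; rewrite sumr_const card_ord.
Qed.

Lemma expipi_int (z : int) : expipi z%:~R = (-1) ^ z.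
Proof. by rewrite /expipi numq_int denq_int root1C. Qed.

Lemma eph_sign (k : 'I_2) : eph k = (-1) ^+ k.
Proof. exact: (expipi_int k). Qed.

Lemma eph_phase (psi chi chi' : 'I_2) :
  eph psi * eph chi * (eph chi')^* = expipi (psi%:R + chi%:R - chi'%:R).
Proof.
have -> : (psi%:R + chi%:R - chi'%:R : rat) = ((psi + chi)%:Z - chi'%:Z)%:~R.
  by rewrite rmorphB /= -!pmulrn natrD.
rewrite expipi_int expfzDr ?oppr_eq0 ?oner_eq0 // -invr_expz !eph_sign.
by rewrite -exprD rmorph_sign invr_sign.
Qed.

Lemma half_square (F : numFieldType) (A B T e : F) :
  A ^+ 2 = B + T *+ 2 ->
  (B / 4%:R) *+ 2 + T + (e * A / 4%:R) *+ 2 = 2%:R^-1 * A * (A + e).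
Proof.
rewrite !mulr2n => sqA; have -> : T = (A ^+ 2 - B) / 2%:R.
  by rewrite sqA; field; rewrite ?pnatr_eq0.
by field; rewrite ?pnatr_eq0.
Qed.

Section DiagonalFusion.
Variables (I : finType) (i0 : I) (S : I -> I -> algC) (h : I -> rat) (c : rat).
Hypothesis S_sym : forall i j, S i j = S j i.
Hypothesis S0_neq0 : forall p, S i0 p != 0.
Variables (J i i' : I) (psi chi chi' : 'I_2).

Definition verlinde_term (p : I) : algC := S J p * S i p * (S i' p)^* / S i0 p.

Definition perm_term (N : pfield I) : algC :=
  SBHS S h c (diagF J psi) N * SBHS S h c (diagF i chi) N
  * (SBHS S h c (diagF i' chi') N)^* / SBHS S h c (diagF i0 0) N.

Definition phase : algC := eph psi * eph chi * (eph chi')^*.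

Lemma perm_term_diag (p : I) (f : 'I_2) :
  perm_term (diagF p f) = verlinde_term p ^+ 2 / 4%:R.
Proof.
rewrite /perm_term /verlinde_term /= !(rmorphM, rmorphXn, fmorphV, conjC_nat).
by field; rewrite ?S0_neq0 ?pnatr_eq0.
Qed.

Lemma perm_term_off (x : offpair I) :
  perm_term (offF x) = verlinde_term (val x).1 * verlinde_term (val x).2.
Proof.
rewrite /perm_term /verlinde_term /= !(S_sym (val x).1) !(S_sym (val x).2) !rmorphM.
by field; rewrite ?S0_neq0.
Qed.

Lemma perm_term_twisted (p : I) (f : 'I_2) :
  perm_term (twF p f) = phase * verlinde_term p / 4%:R.
Proof.
rewrite /perm_term /phase /verlinde_term /= (eph_sign 0) expr0.
rewrite !(rmorphM, rmorphXn, fmorphV, conjC_nat).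
by field; rewrite ?S0_neq0 ?pnatr_eq0.
Qed.

Lemma Nperm_diagonal :
  Nperm i0 S h c (diagF J psi) (diagF i chi) (diagF i' chi')
  = 2%:R^-1 * NA i0 S J i i' * (NA i0 S J i i' + phase).
Proof.
have -> : Nperm i0 S h c (diagF J psi) (diagF i chi) (diagF i' chi')
    = \sum_N perm_term N by [].
have -> : NA i0 S J i i' = \sum_p verlinde_term p by [].
rewrite !big_sumType /=.
rewrite (eq_bigr (fun x => verlinde_term x.1 ^+ 2 / 4%:R)); last first.
  by move=> [p f] _; apply: perm_term_diag.
rewrite (eq_bigr (fun x => verlinde_term (val x).1 * verlinde_term (val x).2));
  last first.
  by move=> x _; apply: perm_term_off.
rewrite [X in _ + X](eq_bigr (fun x => phase * verlinde_term x.1 / 4%:R)); last first.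
  by move=> [p f] _; apply: perm_term_twisted.
rewrite (sum_pair_ord2 (fun p => verlinde_term p ^+ 2 / 4%:R)).
rewrite (sum_pair_ord2 (fun p => phase * verlinde_term p / 4%:R)).
rewrite (sum_offpair (fun x => verlinde_term x.1 * verlinde_term x.2)).
by rewrite -!mulr_suml -mulr_sumr; apply: half_square; apply: sqr_sum.
Qed.

End DiagonalFusion.

Lemma half_fusion_eq1 (F : numFieldType) (b : bool) (k : 'I_2) :
  2%:R^-1 * b%:R * (b%:R + (-1) ^+ k) = 1 :> F <-> k = 0 /\ b.
Proof.
have two_neq0 : 2%:R != 0 :> F by rewrite pnatr_eq0.
case: b; case: k => -[|[|//]] k01; rewrite /= ?mulr1n ?mulr0n ?mulr0 ?mul0r.
- split=> [_|_]; first by split=> //; apply: val_inj.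
  by rewrite mulr1 expr0 -mulr2n mulVf.
- split=> [|[]]; last by move/(congr1 val).
  by rewrite expr1 subrr mulr0 => /eqP; rewrite eq_sym oner_eq0.
- by split=> [/eqP|[]//]; rewrite eq_sym oner_eq0.
- by split=> [/eqP|[]//]; rewrite eq_sym oner_eq0.
Qed.

Theorem mainTheorem2 (I : finType) (i0 : I) (S : I -> I -> algC)
    (h : I -> rat) (c : rat)
    (hS : modular_data i0 S)
    (J : I) (hJ0 : S J i0 = S i0 i0)
    (Jact : I -> I) (hJact : forall i k, NA i0 S J i k = (k == Jact i)%:R) :
  (forall (psi chi chi' : 'I_2) (i i' : I),
     Nperm i0 S h c (diagF J psi) (diagF i chi) (diagF i' chi')
     = 2%:R^-1 * NA i0 S J i i'
         * (NA i0 S J i i' + expipi (psi%:R + chi%:R - chi'%:R)))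
  /\
  (forall (psi chi : 'I_2) (i : I),
     Nperm i0 S h c (diagF J psi) (diagF i chi) (diagF i chi) = 1
     <-> (psi = 0 /\ Jact i = i)).
Proof.
case: hS => S_sym _ S00_gt0 S0_min _.
have S0_neq0 p : S i0 p != 0 by rewrite lt0r_neq0 // (lt_le_trans S00_gt0).
have fusion psi chi chi' i i' :
    Nperm i0 S h c (diagF J psi) (diagF i chi) (diagF i' chi')
    = 2%:R^-1 * NA i0 S J i i' * (NA i0 S J i i' + expipi (psi%:R + chi%:R - chi'%:R)).
  by rewrite Nperm_diagonal // /phase eph_phase.
split=> // psi chi i.
rewrite fusion hJact addrK -/(eph psi) eph_sign half_fusion_eq1.
by rewrite eq_sym; split=> -[-> /eqP].
Qed.
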